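(* Let $p\ge5$, $S$ a Sylow $p$-subgroup of $SU_4(p)$, and $\mathcal{F}$ a saturated fusion system on $S$. If $H\le S$ is nonabelian of order $p^4$ and $\mathcal{F}$-essential, then $H\cong p^{1+2}_+\times C_p$.
   Context: $p^{1+2}_+$ denotes the extraspecial group of order $p^3$ and exponent $p$. $H\le S$ is $\mathcal{F}$-essential if it is $\mathcal{F}$-centric, fully $\mathcal{F}$-normalized, and $\mathrm{Out}_{\mathcal{F}}(H)$ has a strongly $p$-embedded subgroup. *)

From HB Require Import structures.
From mathcomp Require Import all_boot all_order all_algebra all_fingroup all_solvable all_field.
Set Implicit Arguments. Unset Strict Implicit. Unset Printing Implicit Defensive.
Import GRing.Theory.

Local Open Scope group_scope.

Section Fusion.
Variable gT : finGroupType.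
Implicit Types (S P Q R : {set gT}) (f g : {ffun gT -> gT}).

(* A fusion system on S: F P Q is the set Hom_F(P,Q) of F-morphisms.        *)
(* Morphisms are represented by functions gT -> gT; only their restriction  *)
(* to the domain P matters (axiom fs_ext).                                  *)
Record fusion_system S (F : {set gT} -> {set gT} -> {set {ffun gT -> gT}}) : Prop := {
  fs_hom : forall P Q f, f \in F P Q ->
    [/\ group_set P, group_set Q, P \subset S, Q \subset S &
        [/\ morphic P f, {in P &, injective f} & f @: P \subset Q]];
  fs_ext : forall P Q f g, f \in F P Q -> {in P, f =1 g} -> g \in F P Q;
  fs_conj : forall P Q s, group_set P -> group_set Q -> P \subset S -> Q \subset S ->
    s \in S -> P :^ s \subset Q -> [ffun x => x ^ s] \in F P Q;
  fs_res : forall P Q P' Q' f, f \in F P Q -> group_set P' -> group_set Q' ->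
    P' \subset P -> Q' \subset S -> f @: P' \subset Q' -> f \in F P' Q';
  fs_comp : forall P Q R f g, f \in F P Q -> g \in F Q R ->
    [ffun x => g (f x)] \in F P R;
  fs_inv : forall P Q f, f \in F P Q ->
    exists2 g, g \in F (f @: P) P & {in P, forall x, g (f x) = x}
}.

Variables (S : {set gT}) (F : {set gT} -> {set gT} -> {set {ffun gT -> gT}}).

Definition Fconj P Q := exists2 f, f \in F P S & f @: P = Q.

Definition AutF P : {set {perm gT}} := [set a in Aut P | [ffun x => a x] \in F P P].
Definition AutS P : {set {perm gT}} :=
  [set a in Aut P | [exists s in 'N_S(P), [forall x in P, a x == x ^ s]]].
Definition Inn P : {set {perm gT}} :=
  [set a in Aut P | [exists s in P, [forall x in P, a x == x ^ s]]].
Definition OutF P := (AutF P / Inn P)%g.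

Definition fully_normalized P := forall Q, Fconj P Q -> #|'N_S(Q)| <= #|'N_S(P)|.
Definition fully_centralized P := forall Q, Fconj P Q -> #|'C_S(Q)| <= #|'C_S(P)|.
Definition Fcentric P := forall Q, Fconj P Q -> 'C_S(Q) \subset Q.

Definition Nphi P f : {set gT} :=
  [set g in 'N_S(P) | [exists h in 'N_S(f @: P), [forall x in P, f (x ^ g) == f x ^ h]]].

(* saturation, in the sense of Aschbacher--Kessar--Oliver, Def. I.2.2 *)
Definition saturated (p : nat) :=
  fusion_system S F /\
  (forall P, group_set P -> P \subset S -> fully_normalized P ->
     fully_centralized P /\ pHall p (AutF P) (AutS P)) /\
  (forall P f, group_set P -> P \subset S -> f \in F P S ->
     fully_centralized (f @: P) ->
     exists2 g, g \in F (Nphi P f) S & {in P, f =1 g}).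
End Fusion.

Definition strongly_p_embedded (T : finGroupType) (p : nat) (G : {set T}) (M : {group T}) :=
  [/\ M \proper G, p %| #|M| &
      forall x, x \in G :\: M -> ~~ (p %| #|M :&: M :^ x|)].

Definition Fessential (gT : finGroupType) (p : nat) (S : {set gT})
  (F : {set gT} -> {set gT} -> {set {ffun gT -> gT}}) (H : {set gT}) :=
  [/\ Fcentric S F H, fully_normalized S F H &
      exists M : {group coset_of (Inn H)}, strongly_p_embedded p (OutF F H) M].

(* The special unitary group SU_n(q) in GL_n(K), |K| = q^2, w.r.t. the   *)
(* standard Hermitian form; conjugation is x |-> x^q.                     *)
Definition SU (n q : nat) (K : finFieldType) : {set {'GL_n.+1[K]}} :=
  [set g : {'GL_n.+1[K]} | (\det (val g) == 1)%R &&
     ((map_mx (fun x : K => x ^+ q)%R (val g))^T *m val g == 1%:M)%R].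

From mathcomp Require Import all_boot all_order all_algebra all_fingroup all_solvable all_field.
Set Implicit Arguments. Unset Strict Implicit. Unset Printing Implicit Defensive.

(* Elements of a p-subgroup of GL_4 in characteristic p >= 5 are unipotent, so
   H has exponent p.  A nonabelian group H of order p^4 and exponent p either
   has a center of order p^2, and is then p^{1+2} x C_p, or has a center of
   order p, and then has a series 1 < Z(H) < Z_2(H) < C_H(Z_2(H)) < H of
   characteristic subgroups with factors of order p.  In the second case the
   automorphisms of H acting trivially on every factor form a normal p-subgroup
   of Aut(H) that contains every p-element of Aut(H) (the automorphism group of
   a factor has order p - 1); its image in Out_F(H) is a normal p-subgroup
   containing all p-elements, which rules out a strongly p-embedded subgroup. *)

Import GRing.Theory.

Section UnipotentMatrices.
Local Open Scope ring_scope.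

Lemma XsubC1_expn_pchar (R : comNzRingType) p k :
  p \in [pchar R] -> ('X - 1 : {poly R}) ^+ (p ^ k)%N = 'X^(p ^ k)%N - 1.
Proof.
move=> pR; have pRX : p \in [pchar {poly R}] by rewrite pchar_poly.
have pk : [pchar {poly R}].-nat (p ^ k)%N.
  by rewrite (eq_pnat _ (pcharf_eq pRX)) pnatX pnat_id ?(pcharf_prime pR).
by rewrite exprDn_pchar // exprNn_pchar // expr1n.
Qed.

Lemma mx_subr1_expn_pchar (R : comNzRingType) p n (A : 'M[R]_n.+1) k :
  p \in [pchar R] -> (A - 1) ^+ (p ^ k)%N = A ^+ (p ^ k)%N - 1.
Proof.
move=> pR; have := congr1 (horner_mx A) (XsubC1_expn_pchar k pR).
by rewrite !(rmorphXn, rmorphB) /= horner_mx_X rmorph1.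
Qed.

Lemma mx_nilpotent_expn (F : fieldType) n (N : 'M[F]_n.+1) m :
  N ^+ m = 0 -> N ^+ n.+1 = 0.
Proof.
move=> Nm0; have : mxminpoly N %| ('X - 0%:P) ^+ m.
  by apply/mxminpoly_minP; rewrite subr0 rmorphXn /= horner_mx_X.
case/dvdp_exp_XsubCP=> k _ minN.
have kn : (k <= n.+1)%N.
  rewrite -ltnS -(size_exp_XsubC k (0 : F)) -(eqp_size minN) -(size_char_poly N).
  by rewrite dvdp_leq ?mxminpoly_dvd_char // -size_poly_eq0 size_char_poly.
apply/eqP; rewrite -(horner_mx_X N) -rmorphXn /=; apply/eqP/mxminpoly_minP.
by rewrite (eqp_dvdl _ minN) subr0 -(subnKC kn) exprD dvdp_mulIl.
Qed.

Lemma GLval_expg n (R : finComUnitRingType) (x : {'GL_n[R]}) k :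
  GLval (x ^+ k)%g = GLval x ^+ k.
Proof. by elim: k => // k IHk; rewrite expgS exprS GL_ME IHk. Qed.

End UnipotentMatrices.

Local Open Scope group_scope.

Lemma exponent_pgroup_GL (F : finFieldType) n p (H : {group {'GL_n.+1[F]}}) :
  (p \in [pchar F])%R -> (n < p)%N -> p.-group H -> (exponent H %| p)%N.
Proof.
move=> pF np pH; apply/exponentP=> x /(mem_p_elt pH)/p_natP[k ox].
have nil_x : ((GLval x - 1) ^+ n.+1 = 0)%R.
  apply: (@mx_nilpotent_expn _ _ _ (p ^ k)%N).
  by rewrite (mx_subr1_expn_pchar _ _ pF) -GLval_expg -ox expg_order subrr.
apply: val_inj; apply/eqP; rewrite /= GLval_expg -subr_eq0 -[p]expn1.
by rewrite -(mx_subr1_expn_pchar _ _ pF) expn1 -(subnKC np) exprD nil_x mul0r.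
Qed.

Lemma normal_pgroup_not_strongly_p_embedded (gT : finGroupType) p (G M Q : {group gT}) :
  prime p -> p.-group Q -> Q <| G -> {in M, forall x, p.-elt x -> x \in Q} ->
  ~ strongly_p_embedded p G M.
Proof.
move=> p_pr pQ /andP[sQG nQG] pM_Q [ltMG pM tiM].
suff [x Gx MxM] : exists2 x, x \in G :\: M & M :&: Q \subset M :&: M :^ x.
  have [y My oy] := Cauchy p_pr pM.
  have yMQ : <[y]> \subset M :&: Q.
    by rewrite cycle_subG inE My pM_Q // /p_elt oy pnat_id.
  by case/negP: (tiM x Gx); rewrite -oy orderE cardSg ?(subset_trans yMQ).
have [sQM | not_sQM] := boolP (Q \subset M).
  have [x Gx notMx] := subsetPn (proper_subn ltMG).
  exists x; first by rewrite inE notMx.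
  have /normP QxQ : x \in 'N(Q) by apply: (subsetP nQG).
  by rewrite subsetI subsetIl (subset_trans (subsetIr M Q)) // -{1}QxQ conjSg.
have ltMQ_Q : M :&: Q \proper Q.
  by rewrite properEneq subsetIr andbT; apply: contraNneq not_sQM => <-; apply: subsetIl.
have [_ [x /setIP[Qx nMQx] notMQx]] :=
  properP (nilpotent_proper_norm (pgroup_nil pQ) ltMQ_Q).
have notMx : x \notin M by apply: contra notMQx => Mx; rewrite inE Mx.
exists x; first by rewrite inE notMx (subsetP sQG).
by rewrite subsetI subsetIl -(normP nMQx) conjSg subsetIl.
Qed.

Section SeriesStabilizer.
Variables (gT : finGroupType) (p : nat) (H : {group gT}).
Hypotheses (p_pr : prime p) (pH : p.-group H).
Implicit Types (N L : {group gT}) (a b : {perm gT}).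

Definition fix_mod a N L := [forall x in L, x^-1 * a x \in N].

Lemma fix_mod1P a L : reflect {in L, forall x, a x = x} (fix_mod a 1%G L).
Proof.
apply: (iffP forall_inP) => [fixL x /fixL | fixL x /fixL ->]; last first.
  by rewrite mulVg group1.
by move/set1gP/(canRL (mulKVg x)); rewrite mulg1.
Qed.

Lemma char_Aut_stable a L x : L \char H -> a \in Aut H -> x \in L -> a x \in L.
Proof.
by case/andP=> _ /forall_inP charL aH xL; apply/(subsetP (charL a aH))/imset_f.
Qed.

Lemma fix_modM a b N L : L \char H -> a \in Aut H -> b \in Aut H ->
  fix_mod a N L -> fix_mod b N L -> fix_mod (a * b) N L.
Proof.
move=> charL aH bH /forall_inP fixa /forall_inP fixb; apply/forall_inP=> x Lx.
have -> : x^-1 * (a * b)%g x = (x^-1 * a x) * ((a x)^-1 * b (a x)).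
  by rewrite permM -mulgA mulKVg.
by rewrite groupM ?fixa ?fixb ?char_Aut_stable.
Qed.

(* If [b x = x c] with [c] fixed by [b], then [(b ^+ j) x = x c ^+ j], so the
   order of the p-element [c] divides the p'-number [#[b]]. *)
Lemma fix_mod_p'elt b N L : b \in Aut H -> N \subset H -> L \subset H -> p^'.-elt b ->
  fix_mod b 1%G N -> fix_mod b N L -> fix_mod b 1%G L.
Proof.
move=> bH sNH sLH p'b /fix_mod1P fixN /forall_inP fixL; apply/fix_mod1P=> x Lx.
have Hx := subsetP sLH x Lx; set c := x^-1 * b x.
have Nc : c \in N := fixL x Lx.
have bx : b x = x * c by rewrite mulKVg.
have bjx j : (b ^+ j)%g x = x * c ^+ j.
  elim: j => [|j IHj]; first by rewrite perm1 mulg1.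
  rewrite expgSr permM IHj (morphicP (Aut_morphic bH)) ?groupX ?(subsetP sNH c Nc) //.
  by rewrite (fixN (c ^+ j)) ?groupX // bx -mulgA -expgS.
have := bjx #[b]; rewrite expg_order perm1 -{1}[x]mulg1 => /mulgI/esym/eqP.
rewrite -order_dvdn => /pnat_dvd/(_ p'b) p'c.
have /eqP := pnat_1 (mem_p_elt pH (subsetP sNH c Nc)) p'c.
by rewrite order_eq1 bx => /eqP->; rewrite mulg1.
Qed.

(* An automorphism of the cyclic group [L / N] of order [p] is a power map
   [y |-> y ^+ k]; iterating it [#[a] = p ^ m] times gives [y ^+ (k ^ p ^ m)]
   [= y ^+ k] by Fermat's little theorem. *)
Lemma fix_mod_pelt a N L : N \char H -> L \char H -> N \subset L -> #|L : N| = p ->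
  a \in Aut H -> p.-elt a -> fix_mod a N L.
Proof.
move=> charN charL sNL iLN aH pa.
have aM := morphicP (Aut_morphic aH).
have aX y t : y \in H -> a (y ^+ t) = a y ^+ t by move=> Hy; rewrite -(autmE aH) morphX.
have sLH := char_sub charL; have nNL := subset_trans sLH (char_norm charN).
have cycLN : cyclic (L / N) by rewrite prime_cyclic ?card_quotient ?iLN.
have [gq defLN] := cyclicP cycLN.
have /morphimP[g Ng Lg def_gq] : gq \in L / N by rewrite defLN cycle_id.
rewrite {gq}def_gq in defLN.
have [LN_a LN] : (forall y, y \in L -> a y \in L) /\ (forall y, y \in L -> y \in 'N(N)).
  by split=> y Ly; [apply: char_Aut_stable | apply: (subsetP nNL)].
have [k a_pow] : exists k, {in L, forall y, coset N (a y) = coset N y ^+ k}.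
  have : coset N (a g) \in <[coset N g]> by rewrite -defLN mem_quotient ?LN_a.
  case/cycleP=> k agk; exists k => y Ly.
  have : coset N y \in <[coset N g]> by rewrite -defLN mem_quotient.
  case/cycleP=> t yt; set n := (g ^+ t)^-1 * y.
  have Nn : n \in N.
    apply: coset_idr; first by rewrite groupM ?groupV ?groupX ?LN.
    by rewrite morphM ?morphV ?morphX ?groupV ?groupX ?LN // -yt mulVg.
  have Ln := subsetP sNL n Nn; have Hg := subsetP sLH g Lg.
  rewrite -{1}(mulKVg (g ^+ t) y) -/n aM ?groupX ?(subsetP sLH) // aX //.
  rewrite morphM ?groupX ?LN ?LN_a // morphX ?LN ?LN_a //= agk yt expgAC.
  by rewrite (coset_id (char_Aut_stable charN aH Nn)) mulg1.
have a_iter j : {in L, forall y, coset N ((a ^+ j)%g y) = coset N y ^+ (k ^ j)}.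
  elim: j => [|j IHj] z Lz; first by rewrite perm1.
  rewrite expgSr permM a_pow ?IHj -?expgM -?expnSr //.
  by apply: char_Aut_stable Lz; rewrite ?groupX.
have [m oa] := p_natP pa.
have fermat_iter i : (k ^ (p ^ i) = k %[mod p])%N.
  by elim: i => // i IHi; rewrite expnSr expnM -modnXm IHi modnXm fermat_little.
apply/forall_inP=> x Lx; have xLN := mem_quotient N Lx.
have xp : coset N x ^+ p = 1 by rewrite -iLN -card_quotient ?expg_cardG.
have := a_iter #[a] x Lx; rewrite expg_order perm1 oa -(expg_mod _ xp) fermat_iter.
rewrite (expg_mod _ xp) -a_pow // => ax.
apply: coset_idr; first by rewrite groupM ?groupV ?LN ?LN_a.
by rewrite morphM ?morphV ?groupV ?LN ?LN_a //= ax mulVg.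
Qed.

Definition index_p_sub N L := (N \subset L) && (#|L : N| == p).

Definition p_char_series (s : seq {group gT}) :=
  [/\ all (fun L => L \char H) s, path index_p_sub 1%G s & last 1%G s = H].

Definition series_stab (s : seq {group gT}) :=
  [set a in Aut H | path (fix_mod a) 1%G s].

Variable s : seq {group gT}.
Hypothesis series_s : p_char_series s.

Lemma series_stab_group_set : group_set (series_stab s).
Proof.
have [char_s _ _] := series_s.
apply/group_setP; split.
  rewrite inE group1 /=; elim: s 1%G {char_s} => //= L s' IHs N.
  by rewrite IHs andbT; apply/forall_inP=> x _; rewrite perm1 mulVg group1.
move=> a b /setIdP[aH sa] /setIdP[bH sb]; rewrite inE groupM //=.
elim: s 1%G char_s sa sb => //= L s' IHs N /andP[charL char_s'].
by case/andP=> aNL sa /andP[bNL sb]; rewrite fix_modM ?IHs.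
Qed.

Canonical series_stab_group := Group series_stab_group_set.

Lemma path_fix_mod_p'elt b N s' : b \in Aut H -> p^'.-elt b -> N \subset H ->
  all (fun L => L \char H) s' -> fix_mod b 1%G N -> path (fix_mod b) N s' ->
  fix_mod b 1%G (last N s').
Proof.
move=> bH p'b; elim: s' N => //= L s' IHs N sNH /andP[/char_sub sLH char_s'] fixN.
by case/andP=> bNL b_s'; apply: IHs => //; apply: fix_mod_p'elt fixN bNL.
Qed.

Lemma path_fix_mod_pelt a N s' : a \in Aut H -> p.-elt a -> N \char H ->
  all (fun L => L \char H) s' ->
  path index_p_sub N s' -> path (fix_mod a) N s'.
Proof.
move=> aH pa; elim: s' N => //= L s' IHs N charN /andP[charL char_s'].
by case/andP=> /andP[sNL /eqP iLN] ser_s'; rewrite fix_mod_pelt ?IHs.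
Qed.

Lemma series_stab_p'elt b : b \in series_stab s -> p^'.-elt b -> b = 1.
Proof.
have [char_s _ last_s] := series_s; case/setIdP=> bH sb p'b.
suff /fix_mod1P fixH : fix_mod b 1%G H.
  by apply: (eq_Aut bH (group1 _)) => x /fixH->; rewrite perm1.
have fix1 : fix_mod b 1%G 1%G.
  by apply/fix_mod1P=> x /set1gP->; rewrite -(autmE bH) morph1.
by rewrite -last_s path_fix_mod_p'elt ?sub1G.
Qed.

Lemma series_stab_pgroup : p.-group (series_stab s).
Proof.
apply/pgroupP=> q q_pr /(Cauchy q_pr)[b sb ob].
have /constt1P : b.`_p^' = 1.
  apply: series_stab_p'elt (p_elt_constt _ _).
  by rewrite (subsetP _ _ (cycle_constt _ _)) ?cycle_subG.
by rewrite p_eltNK /p_elt ob pnatE.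
Qed.

Lemma pelt_series_stab a : a \in Aut H -> p.-elt a -> a \in series_stab s.
Proof.
have [char_s ser_s _] := series_s; move=> aH pa; rewrite inE aH /=.
by apply: path_fix_mod_pelt (char1 H) char_s ser_s.
Qed.

Lemma Aut_quotient_not_strongly_p_embedded (X : {group {perm gT}})
    (I : {set {perm gT}}) (M : {group coset_of I}) :
  X \subset Aut H -> ~ strongly_p_embedded p (X / I) M.
Proof.
move=> sXA spe_M; pose Q := (X :&: series_stab_group)%G.
have pQ : p.-group Q := pgroupS (subsetIr _ _) series_stab_pgroup.
have pX_Q a : a \in X -> p.-elt a -> a \in Q.
  by move=> Xa pa; rewrite inE Xa pelt_series_stab ?(subsetP sXA).
have nQX : Q <| X.
  rewrite /normal subsetIl; apply/subsetP=> g Xg; rewrite inE.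
  apply/subsetP=> _ /imsetP[a /setIP[Xa sa] ->].
  by rewrite pX_Q ?groupJ // p_eltJ (mem_p_elt series_stab_pgroup).
have nQX_I := morphim_normal (coset_morphism I) nQX.
apply: (normal_pgroup_not_strongly_p_embedded p_pr (morphim_pgroup _ pQ) nQX_I _ spe_M).
case: spe_M => /proper_sub sMX _ _ q Mq pq.
case/morphimP: (subsetP sMX q Mq) pq => a Na Xa -> pa.
rewrite -(constt_p_elt pa) -morph_constt //.
apply: mem_morphim; first by rewrite groupX.
by rewrite pX_Q ?p_elt_constt ?groupX.
Qed.

End SeriesStabilizer.

Lemma Phi_exponent_prime (gT : finGroupType) (p : nat) (G : {group gT}) :
  p.-group G -> (exponent G %| p)%N -> 'Phi(G) = G^`(1).
Proof.
move=> pG expG; suff Mho1 : 'Mho^1(G) = 1 :> {set gT}.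
  by rewrite (Phi_joing pG) Mho1 joingG1.
apply/eqP; rewrite eqEsubset sub1G andbT (MhoE 1 pG) gen_subG.
apply/subsetP=> _ /imsetP[x Gx ->].
by rewrite expn1 (exponentP expG) ?group1.
Qed.

Lemma index_cent1_leq (gT : finGroupType) (G K : {group gT}) x : x \in G ->
  {in G, forall g, [~ x, g] \in K} -> (#|G : 'C_G[x]| <= #|K|)%N.
Proof.
move=> Gx xG_K; rewrite index_cent1 -(card_lcoset _ x^-1); apply: subset_leq_card.
apply/subsetP=> _ /lcosetP[_ /imsetP[g Gg ->] ->].
by rewrite -commgEl xG_K.
Qed.

Section NonabelianExponentP.
Variables (gT : finGroupType) (p : nat) (H : {group gT}).
Hypotheses (p_pr : prime p) (oH : #|H| = (p ^ 4)%N) (expH : (exponent H %| p)%N).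
Hypothesis not_cHH : ~~ abelian H.

Let p_gt1 := prime_gt1 p_pr.
Let pH : p.-group H. Proof. by rewrite /pgroup oH pnatX pnat_id. Qed.

Lemma order_exponent_prime x : x \in H -> x != 1 -> #[x] = p.
Proof.
by move=> Hx ntx; apply/prime_nt_dvdP; rewrite ?order_eq1 ?order_dvdn ?(exponentP expH).
Qed.

Let ntZ : 'Z(H) != 1.
Proof. by rewrite center_nil_eq1 ?(pgroup_nil pH) // -cardG_gt1 oH (ltn_exp2l 0). Qed.

Lemma class2_card_center : H^`(1) \subset 'Z(H) -> (p < #|'Z(H)|)%N.
Proof.
move=> sH'Z; have pZ := pgroupS (center_sub H) pH.
have [_ p_dv_Z _] := pgroup_pdiv pZ ntZ.
rewrite ltn_neqAle dvdn_leq ?cardG_gt0 // andbT; apply/eqP=> /esym oZ.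
have ntH' : #|H^`(1)| != 1%N by rewrite -trivg_card1; apply/eqP/derG1P.
have oH' : #|H^`(1)| = p by apply/(prime_nt_dvdP p_pr ntH'); rewrite -oZ cardSg.
have defH' : H^`(1) = 'Z(H) by apply/eqP; rewrite eqEcard sH'Z oH' oZ /=.
have esH : extraspecial H.
  by rewrite /extraspecial /special (Phi_exponent_prime pH expH) defH' oZ.
have [n _] := card_extraspecial pH esH.
rewrite oH => /eqP; rewrite eqn_exp2l // => /eqP/(congr1 odd).
by rewrite /= odd_double.
Qed.

Lemma class2_nonabelian_p3_subgroup : H^`(1) \subset 'Z(H) ->
  exists E : {group gT}, [/\ E \subset H, #|E| = (p ^ 3)%N & ~~ abelian E].
Proof.
move=> sH'Z; have [x Hx notZx] := subsetPn not_cHH.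
have [y Hy not_cxy] : exists2 y, y \in H & y \notin 'C[x].
  by apply/subsetPn; rewrite sub_cent1.
have ntx : x != 1 by apply: contraNneq not_cxy => ->; rewrite cent11T inE.
have nty : y != 1 by apply: contraNneq not_cxy => ->; rewrite group1.
set c := [~ x, y]; have Zc : c \in 'Z(H) by rewrite (subsetP sH'Z) ?mem_commg.
have [Hc cHc] := setIP Zc.
have ntc : c != 1.
  by apply: contraNneq not_cxy => /eqP/commgP cxy; rewrite -cent1C; apply/cent1P.
have cxc : c \in 'C[x] by apply/cent1P/(centP cHc).
pose W := (<[x]> <*> <[c]>)%G.
have defW : W :=: <[x]> * <[c]> by apply: cent_joinEr; rewrite cycle_subG /= cent_cycle.
have tiW : <[x]> :&: <[c]> = 1.
  rewrite prime_TIg -?orderE ?order_exponent_prime // cycle_subG.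
  by apply: contra notZx; apply: subsetP; rewrite cycle_subG.
have oW : #|W| = (p ^ 2)%N by rewrite defW TI_cardMg // -!orderE !order_exponent_prime.
have sWCx : W \subset 'C[x] by rewrite join_subG !cycle_subG cent1id.
have Wx : x \in W by rewrite mem_gen ?inE ?cycle_id.
have Wc : c \in W by rewrite mem_gen ?inE ?cycle_id ?orbT.
have nWy : y \in 'N(W).
  have cy : c ^ y = c by apply/conjg_fixP/commgP; apply: (centP cHc).
  by rewrite inE /= conjYg -!cycleJ join_subG !cycle_subG conjg_mulR cy groupM.
pose E := (W <*> <[y]>)%G.
have defE : E :=: W * <[y]> by rewrite /= norm_joinEr ?cycle_subG; last exact: nWy.
have tiE : W :&: <[y]> = 1.
  rewrite setIC prime_TIg -?orderE ?order_exponent_prime // cycle_subG.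
  by apply: contra not_cxy; apply: subsetP.
exists E; split.
- by rewrite !join_subG !cycle_subG Hx Hy (subsetP (center_sub H)).
- by rewrite defE TI_cardMg // oW -orderE order_exponent_prime // -expnSr.
have Ex : x \in E by rewrite mem_gen ?inE ?Wx.
have Ey : y \in E by rewrite mem_gen ?inE ?cycle_id ?orbT.
by apply: contra not_cxy => /centsP cEE; rewrite -cent1C; apply/cent1P/cEE.
Qed.

Lemma class2_dprod : H^`(1) \subset 'Z(H) ->
  exists E C : {group gT}, [/\ E \x C = H, E \isog [set: gsort p^{1+2}] & #|C| = p].
Proof.
move=> sH'Z; have [E [sEH oE not_cEE]] := class2_nonabelian_p3_subgroup sH'Z.
have pE := pgroupS sEH pH.
have esE : extraspecial E by apply: (p3group_extraspecial pE); rewrite ?oE ?pfactorK.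
have [z Zz notEz] : exists2 z, z \in 'Z(H) & z \notin E.
  apply/subsetPn/negP=> sZE; have := class2_card_center sH'Z.
  rewrite -(card_center_extraspecial pE esE) ltnNge subset_leq_card //.
  by rewrite subsetI sZE subIset // (centS sEH) orbT.
have [Hz cHz] := setIP Zz.
have ntz : z != 1 by apply: contraNneq notEz => ->.
have oz : #[z] = p := order_exponent_prime Hz ntz.
exists E, <[z]>%G; split; last by rewrite -orderE.
  have tiEz : E :&: <[z]> = 1.
    by rewrite setIC prime_TIg -?orderE ?oz ?cycle_subG.
  rewrite dprodE ?cycle_subG ?(subsetP (centS sEH)) //.
  apply/eqP; rewrite eqEcard mulG_subG sEH cycle_subG Hz /=.
  by rewrite TI_cardMg // oE -orderE oz oH -expnSr.
by rewrite isog_pX1p2 // (dvdn_trans (exponentS sEH)).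
Qed.

Lemma card_center_prime_index_ucn2 : #|'Z(H)| = p -> #|'Z_2(H) : 'Z(H)| = p.
Proof.
move=> oZ; have [sZH nZH] := andP (center_normal H).
have not_cHHZ : ~~ abelian (H / 'Z(H)).
  by apply/negP=> /(der1_min nZH)/class2_card_center; rewrite oZ ltnn.
have esHZ : extraspecial (H / 'Z(H)).
  apply: (p3group_extraspecial (quotient_pgroup _ pH) not_cHHZ).
  by rewrite card_quotient // -divgS // oH oZ (expnS p 3) mulKn ?prime_gt0 ?pfactorK.
have := ucn_central 1 H; rewrite ucn1 => defZ2Z.
rewrite -(card_quotient (subset_trans (ucn_sub 2 H) nZH)) defZ2Z.
exact: card_center_extraspecial (quotient_pgroup _ pH) esHZ.
Qed.

(* [Z_2(H) = <[z0]> Z(H)] for any [z0] in [Z_2(H) :\: Z(H)], and [[z0, H]] lies in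
   [Z(H)], so [C_H(Z_2(H)) = C_H[z0]] has index at most [|Z(H)| = p]. *)
Lemma card_center_prime_cent_ucn2 : #|'Z(H)| = p -> #|'C_H('Z_2(H))| = (p ^ 3)%N.
Proof.
move=> oZ; set Z2 := 'Z_2(H); set M := 'C_H(Z2).
have sZ2H : Z2 \subset H := ucn_sub 2 H.
have sZZ2 : 'Z(H) \subset Z2 by rewrite -ucn1 ucn_subS.
have oZ2 : #|Z2| = (p ^ 2)%N.
  by rewrite -(Lagrange sZZ2) oZ card_center_prime_index_ucn2.
have [z0 Z2z0 notZz0] : exists2 z0, z0 \in Z2 & z0 \notin 'Z(H).
  apply/subsetPn/negP=> /subset_leq_card; rewrite oZ2 oZ.
  by rewrite -{2}(expn1 p) leq_exp2l.
have Hz0 := subsetP sZ2H z0 Z2z0.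
have ntz0 : z0 != 1 by apply: contraNneq notZz0 => ->.
have defZ2 : <[z0]> * 'Z(H) = Z2.
  apply/eqP; rewrite eqEcard mulG_subG cycle_subG Z2z0 sZZ2 /=.
  rewrite TI_cardMg -?orderE ?order_exponent_prime ?oZ ?oZ2 //.
  by rewrite prime_TIg -?orderE ?order_exponent_prime ?cycle_subG.
have sCz0M : 'C_H[z0] \subset M.
  rewrite /M -defZ2 centM cent_cycle setIA subsetI subxx /=.
  by rewrite subIset // centsC subsetIr.
have iHC : #|H : 'C_H[z0]| <= p.
  have sZ2H_Z : [~: Z2, H] \subset 'Z(H) by rewrite -(ucn1 H) ucn_comm.
  by rewrite -oZ index_cent1_leq // => g Hg; rewrite (subsetP sZ2H_Z) ?mem_commg.
have sMH : M \subset H := subsetIl H _.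
have [j oM] := p_natP (pgroupS sMH pH).
have ltMH : M \proper H.
  rewrite properEneq sMH andbT; apply: contraNneq notZz0 => defM.
  by rewrite inE Hz0 (subsetP _ z0 Z2z0) // centsC -defM subsetIr.
have : (p ^ 3 <= #|M|)%N.
  rewrite (leq_trans _ (subset_leq_card sCz0M)) // -(leq_pmul2r (ltnW p_gt1)).
  by rewrite -expnSr -oH -(Lagrange (subsetIl H 'C[z0])) leq_mul2l iHC orbT.
move: (proper_card ltMH); rewrite oM oH !leq_exp2l ?ltn_exp2l // => ltj4 le3j.
by congr (_ ^ _)%N; apply/eqP; rewrite eqn_leq le3j -ltnS ltj4.
Qed.

Lemma card_center_prime_char_series : #|'Z(H)| = p -> exists s, p_char_series p H s.
Proof.
move=> oZ; set Z2 := 'Z_2(H); set M := 'C_H(Z2).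
have oM := card_center_prime_cent_ucn2 oZ; have iZ2Z := card_center_prime_index_ucn2 oZ.
have sZ2H : Z2 \subset H := ucn_sub 2 H.
have sZZ2 : 'Z(H) \subset Z2 by rewrite -ucn1 ucn_subS.
have oZ2 : #|Z2| = (p ^ 2)%N by rewrite -(Lagrange sZZ2) oZ iZ2Z.
have sZ2M : Z2 \subset M by rewrite subsetI sZ2H; apply: card_p2group_abelian oZ2.
have sMH : M \subset H := subsetIl H _.
have iMZ2 : #|M : Z2| = p.
  by rewrite -divgS // oM oZ2 (expnS p 2) mulnK ?expn_gt0 ?prime_gt0.
have iHM : #|H : M| = p.
  by rewrite -divgS // oH oM (expnS p 3) mulnK ?expn_gt0 ?prime_gt0.
exists [:: 'Z(H)%G; 'Z_2(H)%G; 'C_H(Z2)%G; H]; split => //=.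
  by rewrite center_char ucn_char subcent_char ?char_refl ?ucn_char.
by rewrite /index_p_sub sub1G indexg1 oZ sZZ2 iZ2Z sZ2M iMZ2 sMH iHM eqxx.
Qed.

Lemma nonabelian_exponent_prime_structure :
  (exists E C : {group gT}, [/\ E \x C = H, E \isog [set: gsort p^{1+2}] & #|C| = p])
  \/ exists s, p_char_series p H s.
Proof.
have [oZ | neZ] := eqVneq #|'Z(H)| p.
  by right; apply: card_center_prime_char_series.
left; apply: class2_dprod; have [sZH nZH] := andP (center_normal H).
rewrite der1_min // (p2group_abelian (quotient_pgroup _ pH)) // card_quotient //.
have [k oZ] := p_natP (pgroupS sZH pH).
rewrite -divgS // logn_div ?cardSg // oH oZ !pfactorK //.
case: k oZ neZ => [|[|k]] oZ; last by rewrite leq_subLR addnC.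
  by move: ntZ; rewrite trivg_card1 oZ.
by rewrite oZ expn1 eqxx.
Qed.

End NonabelianExponentP.

Lemma AutF_group_set (gT : finGroupType) (S H : {group gT})
    (F : {set gT} -> {set gT} -> {set {ffun gT -> gT}}) :
  fusion_system S F -> H \subset S -> group_set (AutF F H).
Proof.
move=> fsF sHS; apply/group_setP; split.
  rewrite inE group1 /=.
  have sHxH : H :^ (1 : gT) \subset H by rewrite conjsg1.
  have F1 := fs_conj fsF (groupP H) (groupP H) sHS sHS (group1 S) sHxH.
  by apply: (fs_ext fsF F1) => x _; rewrite !ffunE perm1 conjg1.
move=> a b /setIdP[Aa Fa] /setIdP[Ab Fb]; rewrite inE groupM //=.
by apply: (fs_ext fsF (fs_comp fsF Fa Fb)) => x _; rewrite !ffunE permM.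
Qed.

Theorem lemma4p2 (p : nat) (K : finFieldType) (S : {group {'GL_4[K]}})
  (F : {set {'GL_4[K]}} -> {set {'GL_4[K]}} -> {set {ffun {'GL_4[K]} -> {'GL_4[K]}}})
  (H : {group {'GL_4[K]}}) :
  prime p -> 5 <= p -> #|K| = (p ^ 2)%N ->
  S \in 'Syl_p(SU 3 p K) ->
  saturated S F p ->
  H \subset S -> ~~ abelian H -> #|H| = (p ^ 4)%N ->
  Fessential p S F H ->
  exists E C : {group {'GL_4[K]}},
    [/\ E \x C = H, E \isog [set: gsort p^{1+2}] & #|C| = p].
Proof.
move=> p_pr p_ge5 cardK _ [fsF _] sHS not_cHH oH [_ _ [M spe_M]].
have pH : p.-group H by rewrite /pgroup oH pnatX pnat_id.
have expH : exponent H %| p.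
  by apply: exponent_pgroup_GL (card_finPcharP cardK p_pr) (ltnW p_ge5) pH.
have [// | [s series_s]] := nonabelian_exponent_prime_structure p_pr oH expH not_cHH.
have sAutF_Aut : AutF F H \subset Aut H by apply/subsetP=> a /setIdP[].
by case: (Aut_quotient_not_strongly_p_embedded p_pr pH series_s
            (X := Group (AutF_group_set fsF sHS)) sAutF_Aut spe_M).
Qed.
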